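(* Let $\mu_t(s,a)=\mathbb P_{\pi^{\mathrm{expl}}}(s_t=s,\ a_t=a)$ for $t\in[T]$, $(s,a)\in\mathcal S\times\mathcal A$. Suppose that for every $(s,a)$ there is some $t$ with $\mu_t(s,a)>0$. Then the covering length $L$ satisfies $$\frac{\log 2}{2\min_{(s,a)\in\mathcal S\times\mathcal A}\sum_{t\in[T]}\mu_t(s,a)}\ \le\ L\ \le\ \left\lceil\frac{\log(2SA)}{\min_{(s,a)\in\mathcal S\times\mathcal A}\max_{t\in[T]}\mu_t(s,a)}\right\rceil .$$
   Context: Deterministic finite-horizon MDP $\mathcal M=(\mathcal S,\mathcal A,T,s_1,f,R)$ with finite state set of size $S=|\mathcal S|$ and action set of size $A=|\mathcal A|$, start state $s_1$, transitions $s_{t+1}=f(s_t,a_t)$, steps $t\in[T]$. $\pi^{\mathrm{expl}}$ is a fixed exploration policy (maps $\pi^{\mathrm{expl}}_t:\mathcal S\to\Delta(\mathcal A)$), and $\mathbb P_{\pi^{\mathrm{expl}}}$ is the law of an episode from $s_1$ following it. The covering length $L$ is the least number of independent episodes run with $\pi^{\mathrm{expl}}$ such that, with probability at least $1/2$, every pair $(s,a)\in\mathcal S\times\mathcal A$ is visited (at some step of some episode). *)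

From HB Require Import structures.
From mathcomp Require Import all_boot all_order all_algebra.
From mathcomp Require Import reals exp.
Set Implicit Arguments. Unset Strict Implicit. Unset Printing Implicit Defensive.
Import Order.TTheory GRing.Theory Num.Theory.
Local Open Scope ring_scope.

Section MDP.
Variables (R : realType) (S A : finType) (T : nat) (s1 : S) (f : S -> A -> S).
(* exploration policy: pi t s is a distribution over A (hypotheses in theorem) *)
Variable pi : 'I_T -> S -> A -> R.

(* an episode is determined by its action sequence (deterministic dynamics) *)
Definition episode := {ffun 'I_T -> A}.

(* state s_t at (0-indexed) step t: s_1 followed by f applied to previous actions *)
Definition state_at (w : episode) (t : 'I_T) : S :=
  foldl f s1 (take t [seq w i | i <- enum 'I_T]).

Definition traj_prob (w : episode) : R :=
  \prod_(t : 'I_T) pi t (state_at w t) (w t).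

Definition mu (t : 'I_T) (s : S) (a : A) : R :=
  \sum_(w : episode | (state_at w t == s) && (w t == a)) traj_prob w.

Definition visits (w : episode) (p : S * A) : bool :=
  [exists t : 'I_T, (state_at w t == p.1) && (w t == p.2)].

Definition cover_prob (n : nat) : R :=
  \sum_(ws : {ffun 'I_n -> episode}
          | [forall p : S * A, exists i : 'I_n, visits (ws i) p])
     \prod_(i : 'I_n) traj_prob (ws i).

Definition is_covering_length (L : nat) : Prop :=
  1 / 2 <= cover_prob L /\ forall m : nat, (m < L)%N -> cover_prob m < 1 / 2.
End MDP.

(* minimum of F over a finite type (0 if the type is empty) *)
Definition fmin (R : realType) (X : finType) (F : X -> R) : R :=
  match [pick x : X] with
  | Some x0 => \big[Order.min/F x0]_(x : X) F x
  | None => 0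
  end.

(** Let [q(s,a)] be the probability that a single exploration episode visits
    [(s,a)].  Since [q(s,a)] lies between [max_t mu_t(s,a)] and
    [sum_t mu_t(s,a)], the bounds follow from two estimates on [n] independent
    episodes.  Upper bound: by the union bound, some pair stays unvisited with
    probability at most [SA (1 - min q)^n <= SA exp(-n min q)], which is at most
    [1/2] once [n >= log(2SA) / min q].  Lower bound: the pair minimising [q] is
    covered with probability [1 - (1 - q)^n], and [(1 - q)^L <= 1/2] forces
    [L >= log 2 / (2 q)] because [1 - q >= exp(-2q)] for [q <= 1/2]. *)
From Pilot Require Import Defs.
From HB Require Import structures.
From mathcomp Require Import all_boot all_order all_algebra.
From mathcomp Require Import reals sequences exp ring lra.
Import Order.TTheory GRing.Theory Num.Theory.
Local Open Scope ring_scope.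

Set Implicit Arguments. Unset Strict Implicit.

Section ChainRule.
Variables (R : realType) (A : finType).

Definition ffun_cons n (a : A) (w : {ffun 'I_n -> A}) : {ffun 'I_n.+1 -> A} :=
  [ffun i => if unlift ord0 i is Some j then w j else a].

Lemma ffun_cons_bij n : bijective (fun p : A * {ffun 'I_n -> A} => ffun_cons p.1 p.2).
Proof.
exists (fun w : {ffun 'I_n.+1 -> A} => (w ord0, [ffun j => w (lift ord0 j)])).
  move=> [a w] /=; rewrite /ffun_cons ffunE unlift_none; congr pair.
  by apply/ffunP => j; rewrite !ffunE liftK.
move=> w; apply/ffunP => i; rewrite /ffun_cons ffunE /=.
by case: unliftP => [j ->|->] //; rewrite ffunE.
Qed.

(* [g t pre] is the law of the [t]-th letter given the prefix [pre]. *)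
Lemma sum_chain_prod_eq1 n (g : 'I_n -> seq A -> A -> R) :
  (forall t pre, \sum_a g t pre a = 1) ->
  \sum_(w : {ffun 'I_n -> A})
     \prod_(t : 'I_n) g t (take t [seq w i | i <- enum 'I_n]) (w t) = 1.
Proof.
elim: n g => [|n IH] g g_sum1.
  under eq_bigr do rewrite big_ord0.
  by rewrite sumr_const card_ffun card_ord expn0.
rewrite (reindex _ (onW_bij _ (ffun_cons_bij n))) /=.
rewrite -(pair_big xpredT xpredT (fun a w => \prod_(t < n.+1)
  g t (take t [seq ffun_cons a w i | i <- enum 'I_n.+1]) (ffun_cons a w t))) /=.
transitivity (\sum_a g ord0 [::] a); last exact: g_sum1.
apply: eq_bigr => a _.
transitivity (g ord0 [::] a * \sum_(w : {ffun 'I_n -> A})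
    \prod_(t < n) g (lift ord0 t) (a :: take t [seq w i | i <- enum 'I_n]) (w t)).
  rewrite mulr_sumr; apply: eq_bigr => w _.
  rewrite big_ord_recl /= take0 /ffun_cons ffunE unlift_none; congr (_ * _).
  apply: eq_bigr => t _; rewrite ffunE liftK enum_ordSl /= ffunE unlift_none.
  rewrite -map_comp; congr (g _ (_ :: take _ _) _).
  by apply: eq_map => j /=; rewrite ffunE liftK.
by rewrite (IH (fun t pre => g (lift ord0 t) (a :: pre))) ?mulr1 // => t pre; apply: g_sum1.
Qed.

End ChainRule.

Section Inequalities.
Variable R : realType.

Lemma expR_N2M_le (x : R) : 0 <= x <= 1 / 2 -> expR (- (2 * x)) <= 1 - x.
Proof.
case/andP => x_ge0 x_le; rewrite expRN -[leLHS]mul1r ler_pdivrMr ?expR_gt0 //.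
by have := expR_ge1Dx (2 * x); nra.
Qed.

Lemma ln2_le_geometric (p : R) L : 0 < p -> (1 - p) ^+ L <= 1 / 2 -> ln 2 <= L%:R * (2 * p).
Proof.
move=> p_gt0 geom_le.
have L_ge1 : 1 <= L%:R :> R.
  rewrite ler1n lt0n; apply: contraTneq geom_le => ->; rewrite expr0 -ltNge; lra.
have [p_ge|p_lt] := leP (1 / 2) p.
  have ln2_le1 : ln (2 : R) <= 1 by have := @le_ln1Dx R 1; rewrite -natr1 => ->; lra.
  by apply: le_trans ln2_le1 _; nra.
have : expR (- (L%:R * (2 * p))) <= 1 / 2.
  rewrite -mulrN expRM_natl; apply: le_trans geom_le; apply: lerXn2r.
  - exact: expR_ge0.
  - by rewrite nnegrE; lra.
  - by apply: expR_N2M_le; lra.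
by rewrite expRN div1r lef_pV2 ?posrE ?expR_gt0 // -ler_expR lnK ?posrE.
Qed.

Lemma ceil_nat (x : R) : 0 <= x -> exists2 n : nat, n%:Z = Num.ceil x & x <= n%:R.
Proof.
move=> x_ge0; have ceil_x_ge0 : 0 <= Num.ceil x by rewrite ceil_ge0 (lt_le_trans _ x_ge0) ?ltrN10.
exists `|Num.ceil x|%N; first by rewrite abszE ger0_norm.
by rewrite natr_absz ger0_norm ?ceil_ge.
Qed.

End Inequalities.

Section Exploration.
Variables (R : realType) (S A : finType) (T : nat) (s1 : S)
  (f : S -> A -> S) (pi : 'I_T -> S -> A -> R).
Hypothesis pi_ge0 : forall t s a, 0 <= pi t s a.
Hypothesis pi_sum1 : forall t s, \sum_(a : A) pi t s a = 1.

Local Notation P := (traj_prob s1 f pi).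
Local Notation cover_prob := (cover_prob s1 f pi).
Local Notation is_covering_length := (is_covering_length s1 f pi).

Lemma traj_prob_ge0 (w : episode A T) : 0 <= P w.
Proof. exact: prodr_ge0. Qed.

Lemma sum_traj_prob : \sum_(w : episode A T) P w = 1.
Proof.
exact: (@sum_chain_prod_eq1 R A T (fun t pre => pi t (foldl f s1 pre)) (fun t _ => pi_sum1 t _)).
Qed.

Definition prob (E : pred (episode A T)) : R := \sum_(w | E w) P w.

Lemma prob_ge0 E : 0 <= prob E.
Proof. by apply: sumr_ge0 => w _; apply: traj_prob_ge0. Qed.

Lemma probC E : prob (predC E) = 1 - prob E.
Proof. by rewrite /prob -sum_traj_prob (bigID E predT) /= addrC addrK. Qed.

Lemma prob_le1 E : prob E <= 1.
Proof. by rewrite -subr_ge0 -probC prob_ge0. Qed.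

Lemma le_prob (E F : pred (episode A T)) : subpred E F -> prob E <= prob F.
Proof.
move=> sEF; rewrite /prob [leLHS]big_mkcond [leRHS]big_mkcond.
apply: ler_sum => w _; case: ifP => [/sEF -> //|_].
by case: ifP => _; rewrite ?traj_prob_ge0.
Qed.

Definition visit_prob (p : S * A) : R := prob (visits s1 f ^~ p).

Lemma mu_le_visit_prob t s a : mu s1 f pi t s a <= visit_prob (s, a).
Proof. by apply: le_prob => w Ew; apply/existsP; exists t. Qed.

Lemma bigmax_mu_le_visit_prob s a :
  \big[Order.max/0]_t mu s1 f pi t s a <= visit_prob (s, a).
Proof. by apply: bigmax_le => [|t _]; [exact: prob_ge0|exact: mu_le_visit_prob]. Qed.

Lemma visit_prob_le_sum_mu s a : visit_prob (s, a) <= \sum_t mu s1 f pi t s a.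
Proof.
rewrite /visit_prob /prob /mu big_mkcond (exchange_big_dep xpredT) //=.
apply: ler_sum => w _; case: ifP => [/existsP [t Ht]|_]; last first.
  by apply: sumr_ge0 => w' _; apply: traj_prob_ge0.
by rewrite (bigD1 t) //= lerDl; apply: sumr_ge0 => w' _; apply: traj_prob_ge0.
Qed.

Lemma prob_iid_all n (E : pred (episode A T)) :
  \sum_(ws : {ffun 'I_n -> episode A T} | [forall i, E (ws i)]) \prod_i P (ws i)
  = prob E ^+ n.
Proof.
rewrite -[in RHS](card_ord n) -prodr_const /prob.
under [RHS]eq_bigr do rewrite big_mkcond.
rewrite bigA_distr_bigA /= big_mkcond; apply: eq_bigr => ws _.
case: ifP => [/forallP E_ws|]; first by apply: eq_bigr => i _; rewrite E_ws.
by move/negbT; rewrite negb_forall => /existsP [i Ei]; rewrite (bigD1 i) //= (negbTE Ei) mul0r.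
Qed.

Lemma sum_iid_prod n : \sum_(ws : {ffun 'I_n -> episode A T}) \prod_i P (ws i) = 1.
Proof.
have all_true := prob_iid_all n predT.
rewrite [prob _]sum_traj_prob expr1n in all_true; rewrite -[RHS]all_true.
by apply: eq_bigl => ws; apply/esym/forallP.
Qed.

Lemma prob_unvisited p : prob (fun w => ~~ visits s1 f w p) = 1 - visit_prob p.
Proof. exact: (probC (visits s1 f ^~ p)). Qed.

Lemma cover_prob_ge n c : (forall p, (1 - visit_prob p) ^+ n <= c) ->
  1 - #|{: S * A}|%:R * c <= cover_prob n.
Proof.
move=> unvisited_le; rewrite /Defs.cover_prob.
set C := fun ws : {ffun 'I_n -> episode A T} => [forall p, exists i, visits s1 f (ws i) p].
rewrite -[X in X - _ <= _](sum_iid_prod n) (bigID C) /= -addrA gerDl subr_le0.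
have prod_ge0 (ws : {ffun 'I_n -> episode A T}) : 0 <= \prod_i P (ws i).
  by apply: prodr_ge0 => i _; apply: traj_prob_ge0.
apply: (@le_trans _ _ (\sum_(ws : {ffun 'I_n -> episode A T}) \sum_(p : S * A)
    (if [forall i, ~~ visits s1 f (ws i) p] then \prod_i P (ws i) else 0))).
  rewrite big_mkcond; apply: ler_sum => ws _.
  have term_ge0 p : 0 <= if [forall i, ~~ visits s1 f (ws i) p] then \prod_i P (ws i) else 0.
    by case: ifP.
  case: ifP => [|_]; last by apply: sumr_ge0 => p _.
  rewrite /C negb_forall => /existsP [p]; rewrite negb_exists => unvisited.
  by rewrite (bigD1 p) //= unvisited lerDl; apply: sumr_ge0 => q _.
rewrite exchange_big /= mulr_natl -sumr_const; apply: ler_sum => p _.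
by rewrite -big_mkcond /= (prob_iid_all n (fun w => ~~ visits s1 f w p)) prob_unvisited.
Qed.

Lemma cover_prob_le n p : cover_prob n <= 1 - (1 - visit_prob p) ^+ n.
Proof.
pose U := fun w : episode A T => ~~ visits s1 f w p.
rewrite /Defs.cover_prob -prob_unvisited -(prob_iid_all n U).
rewrite -[X in X - _](sum_iid_prod n).
rewrite [in X in X - _](bigID (fun ws : {ffun 'I_n -> episode A T} => [forall i, U (ws i)])).
rewrite /= addrAC subrr add0r.
rewrite [leLHS]big_mkcond [leRHS]big_mkcond; apply: ler_sum => ws _.
case: ifP => [/forallP/(_ p)/existsP [i visited]|_]; last first.
  by case: ifP => _ //; apply: prodr_ge0 => i _; apply: traj_prob_ge0.
by rewrite ifT // negb_forall; apply/existsP; exists i; rewrite /U visited.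
Qed.

Lemma exists_covering_length n : 1 / 2 <= cover_prob n ->
  exists L, is_covering_length L.
Proof.
move=> cover_n; have ex_n : exists m, 1 / 2 <= cover_prob m by exists n.
exists (ex_minn ex_n); case: ex_minnP => m cover_m min_m; split => // k lt_km.
by rewrite ltNge; apply/negP => /min_m; rewrite leqNgt lt_km.
Qed.

Lemma covering_length_le L n : is_covering_length L ->
  1 / 2 <= cover_prob n -> (L <= n)%N.
Proof.
by move=> [_ min_L] cover_n; rewrite leqNgt; apply/negP => /min_L; rewrite ltNge cover_n.
Qed.

Lemma ceil_cover_prob_ge_half M : 0 < M -> (forall p, M <= visit_prob p) -> (0 < #|A|)%N ->
  exists2 n : nat, n%:Z = Num.ceil (ln (2 * #|S| * #|A|)%N%:R / M) & 1 / 2 <= cover_prob n.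
Proof.
move=> M_gt0 M_le A_gt0; set K := (2 * #|S| * #|A|)%N.
have S_gt0 : (0 < #|S|)%N by apply/card_gt0P; exists s1.
have K_gt0 : 0 < K%:R :> R by rewrite ltr0n !muln_gt0 S_gt0 A_gt0.
have [|n n_ceil n_ge] := @ceil_nat R (ln K%:R / M).
  by rewrite divr_ge0 ?(ltW M_gt0) // ln_ge0 // ler1n -(ltr0n R).
exists n => //; apply: le_trans (cover_prob_ge (c := K%:R^-1) _).
  have half : (#|S| * #|A|)%N%:R / (2 * (#|S| * #|A|))%N%:R = 1 / 2 :> R.
    by rewrite natrM; field; rewrite !pnatr_eq0 -!lt0n A_gt0 S_gt0.
  by rewrite (@eq_card_prod S A) // /K -mulnA half; lra.
move=> p; have unvisited_ge0 : 0 <= 1 - visit_prob p by rewrite subr_ge0 prob_le1.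
have unvisited_le : 1 - visit_prob p <= expR (- M).
  by apply: le_trans (expR_ge1Dx _); rewrite lerB.
apply: le_trans (lerXn2r n unvisited_ge0 (expR_ge0 _) unvisited_le) _.
rewrite -expRM_natl -[X in _ <= X^-1](lnK K_gt0) -expRN ler_expR mulrN lerN2.
by rewrite -ler_pdivrMr.
Qed.

Lemma ln2_le_covering_length L p : 0 < visit_prob p -> is_covering_length L ->
  ln 2 <= L%:R * (2 * visit_prob p).
Proof.
move=> p_gt0 [cover_L _]; apply: ln2_le_geometric p_gt0 _.
by have := le_trans cover_L (cover_prob_le L p); lra.
Qed.

Lemma cover_prob_card0 n : #|A| = 0%N -> cover_prob n = 1.
Proof.
move=> A0; rewrite /Defs.cover_prob -[RHS](sum_iid_prod n); apply: eq_bigl => ws.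
by apply/forallP => -[s a]; have := card0_eq A0 a.
Qed.

End Exploration.

Lemma fmin_le (R : realType) (X : finType) (F : X -> R) x : fmin F <= F x.
Proof. by rewrite /fmin; case: pickP => [x0 _|/(_ x)//]; apply: bigmin_le. Qed.

Lemma fmin_attained (R : realType) (X : finType) (F : X -> R) (x1 : X) :
  exists x, fmin F = F x.
Proof.
rewrite /fmin; case: pickP => [x0 _|/(_ x1)//].
elim/big_ind: _ => [|u v [a ->] [b ->]|i _]; [by exists x0| |by exists i].
by case: (leP (F a) (F b)) => _; [exists a|exists b].
Qed.

Lemma fmin_card0 (R : realType) (X : finType) (F : X -> R) : #|X| = 0%N -> fmin F = 0.
Proof. by move=> X0; rewrite /fmin; case: pickP => // x; have := card0_eq X0 x. Qed.

Unset Implicit Arguments. Set Strict Implicit.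

Theorem mainTheorem11 (R : realType) (S A : finType) (T : nat) (s1 : S)
  (f : S -> A -> S) (pi : 'I_T -> S -> A -> R)
  (pi_ge0 : forall t s a, 0 <= pi t s a)
  (pi_sum1 : forall t s, \sum_(a : A) pi t s a = 1)
  (hmu : forall (s : S) (a : A), exists t : 'I_T, 0 < mu s1 f pi t s a) :
  (exists L : nat, is_covering_length s1 f pi L) /\
  forall L : nat, is_covering_length s1 f pi L ->
    ln 2 / (2 * fmin (fun p : S * A => \sum_(t : 'I_T) mu s1 f pi t p.1 p.2))
      <= L%:R /\
    (L%:Z <= Num.ceil (ln ((2 * #|S| * #|A|)%N%:R)
        / fmin (fun p : S * A => \big[Order.max/0]_(t : 'I_T) mu s1 f pi t p.1 p.2)))%R.
Proof.
have [A0|A_gt0] := posnP #|A|.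
  have cover1 n : cover_prob s1 f pi n = 1 := cover_prob_card0 s1 f pi_sum1 n A0.
  have cover0 : 1 / 2 <= cover_prob s1 f pi 0 by rewrite cover1; lra.
  split=> [|L covL]; first exact: exists_covering_length cover0.
  have /eqP-> : (L == 0)%N by rewrite -leqn0 (covering_length_le covL cover0).
  by rewrite !fmin_card0 ?card_prod ?A0 ?muln0 // mulr0 invr0 !mulr0 ceil0.
have /card_gt0P[a0 _] := A_gt0.
set Q := fmin _; set M := fmin _.
have M_le p : M <= visit_prob s1 f pi p.
  by case: p => s a; apply: le_trans (fmin_le _ (s, a)) _; apply: bigmax_mu_le_visit_prob.
have M_gt0 : 0 < M.
  have [[s a] M_eq] :=
    fmin_attained (fun p : S * A => \big[Order.max/0]_t mu s1 f pi t p.1 p.2) (s1, a0).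
  rewrite /M M_eq; have [t mu_gt0] := hmu s a.
  exact: lt_le_trans mu_gt0 (le_bigmax _ _ t).
have [n n_ceil cover_n] := ceil_cover_prob_ge_half pi_ge0 pi_sum1 M_gt0 M_le A_gt0.
split=> [|L covL]; first exact: exists_covering_length cover_n.
split; last by rewrite -n_ceil lez_nat (covering_length_le covL cover_n).
have [[s a] Q_eq] := fmin_attained (fun p : S * A => \sum_t mu s1 f pi t p.1 p.2) (s1, a0).
have visit_le_Q : visit_prob s1 f pi (s, a) <= Q.
  by rewrite /Q Q_eq; exact: visit_prob_le_sum_mu.
have visit_gt0 := lt_le_trans M_gt0 (M_le (s, a)).
rewrite ler_pdivrMr ?mulr_gt0 ?(lt_le_trans visit_gt0 visit_le_Q) //.
apply: le_trans (ln2_le_covering_length pi_ge0 pi_sum1 visit_gt0 covL) _.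
by rewrite !ler_wpM2l.
Qed.
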